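(* Let $\mathbb{X}$ be a finite set, let $\mathcal{H}_A$ be a finite-dimensional Hilbert space, and let $\{\rho_A^x\}_{x\in\mathbb{X}}$ be density operators on $\mathcal{H}_A$ (the quantum encoding of a discrete random variable $X$ with probability mass function $p_X$ satisfying $p_X(x)>0$ for all $x\in\mathbb{X}$). Then \[ \mathcal{Q}(X\rightarrow A)_{\rho_A}\leq \min_{\pi\in\Delta(\mathbb{X})}\max_{x\in\mathbb{X}}\widetilde{D}_\infty\Big(\rho_A^x\,\Big\|\,\sum_{x'\in\mathbb{X}}\pi(x')\rho_A^{x'}\Big). \]
   Context: All logarithms are base 2. $\Delta(\mathbb{X})$ is the set of probability mass functions on $\mathbb{X}$. For a density operator $\rho$ and a positive semi-definite operator $\sigma$, $\widetilde{D}_\infty(\rho\|\sigma)=\log\big(\inf\{\mu\in\mathbb{R}:\rho\leq\mu\sigma\}\big)$ (operator inequality), with $\widetilde{D}_\infty(\rho\|\sigma)=+\infty$ if the support of $\rho$ is not contained in the support of $\sigma$. The maximal quantum leakage is \[ \mathcal{Q}(X\rightarrow A)_{\rho_A}=\sup_{\{F_y\}_{y\in\mathbb{Y}}}\log\Big(\sum_{y\in\mathbb{Y}}\max_{x\in\mathbb{X}}\operatorname{tr}(\rho_A^xF_y)\Big), \] where the supremum is over all POVMs $\{F_y\}_{y\in\mathbb{Y}}$ on $\mathcal{H}_A$ (positive semi-definite operators summing to the identity) with arbitrary finite outcome set $\mathbb{Y}$. *)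

From HB Require Import structures.
From mathcomp Require Import all_boot all_order all_algebra.
From mathcomp Require Import complex.
From mathcomp Require Import all_classical all_reals all_analysis.

Set Implicit Arguments.
Unset Strict Implicit.
Unset Printing Implicit Defensive.

Import Order.TTheory GRing.Theory Num.Theory.
Local Open Scope ring_scope.

(* Hilbert space H_A = C^n, C = R[i] (complex numbers over a real field R);
   operators are n x n complex matrices. *)

Definition log2 (R : realType) (x : R) : R := ln x / ln 2.

Definition adjmx (R : realType) (n : nat) (A : 'M[R[i]]_n) : 'M[R[i]]_n :=
  (map_mx Num.conj A)^T.

Definition psd (R : realType) (n : nat) (A : 'M[R[i]]_n) : Prop :=
  adjmx A = A /\
  forall v : 'cV[R[i]]_n, 0 <= ((map_mx Num.conj v)^T *m A *m v) 0 0.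

Definition density (R : realType) (n : nat) (rho : 'M[R[i]]_n) : Prop :=
  psd rho /\ \tr rho = 1.

Definition opleq (R : realType) (n : nat) (A B : 'M[R[i]]_n) : Prop :=
  psd (B - A).

Definition povm (R : realType) (n : nat) (Y : finType) (F : Y -> 'M[R[i]]_n) : Prop :=
  (forall y, psd (F y)) /\ \sum_(y : Y) F y = 1%:M.

(* support of A (its range = column space) contained in support of B *)
Definition supp_sub (R : realType) (n : nat) (A B : 'M[R[i]]_n) : bool :=
  (A^T <= B^T)%MS.

Definition Dmax (R : realType) (n : nat) (rho sigma : 'M[R[i]]_n) : \bar R :=
  if supp_sub rho sigma then
    (log2 (inf [set mu : R | opleq rho ((mu%:C)%C *: sigma)]))%:E
  else +oo%E.

Definition leak_val (R : realType) (n : nat) (X Y : finType)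
  (rho : X -> 'M[R[i]]_n) (F : Y -> 'M[R[i]]_n) : R :=
  log2 (\sum_(y : Y) \big[Num.max/0]_(x : X) complex.Re (\tr (rho x *m F y))).

Definition Qleak (R : realType) (n : nat) (X : finType) (rho : X -> 'M[R[i]]_n)
  : \bar R :=
  ereal_sup [set v : \bar R | exists (Y : finType) (F : Y -> 'M[R[i]]_n),
                 povm F /\ v = (leak_val rho F)%:E].

(* Let sigma = sum_x' pi(x') rho^x'.  The bound is trivial unless every rho^x
   is supported in sigma, and then rho^x <= mu sigma for some mu: in an
   eigenbasis of sigma, rho^x vanishes off the support of sigma, where the
   eigenvalues of sigma are bounded below.  With m_x the infimum of such mu,
   D~oo(rho^x || sigma) = log m_x and tr(rho^x F) <= m_x tr(sigma F) for every
   F >= 0.  Hence for any POVM {F_y},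
     1 = sum_y tr(rho^x F_y) <= sum_y max_x tr(rho^x F_y)
       <= max_x m_x * sum_y tr(sigma F_y) = max_x m_x,
   and taking logarithms gives the claim. *)

From HB Require Import structures.
From mathcomp Require Import all_boot all_order all_algebra.
From mathcomp Require Import complex.
From mathcomp Require Import all_classical all_reals all_analysis.
From mathcomp Require Import ring.
Import Order.TTheory GRing.Theory Num.Theory.
Local Open Scope ring_scope.
Local Open Scope sesquilinear_scope.

Set Implicit Arguments.
Unset Strict Implicit.
Unset Printing Implicit Defensive.

Lemma ler_sum_term (F : numDomainType) (I : finType) (G : I -> F) i :
  (forall j, 0 <= G j) -> G i <= \sum_j G j.
Proof. by move=> G_ge0; rewrite (bigD1 i) //= lerDl sumr_ge0. Qed.

Lemma mulr_le_of_sqr_le (F : numDomainType) (x y c : F) :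
  0 <= x -> 0 <= y -> x ^+ 2 <= c -> y ^+ 2 <= c -> x * y <= c.
Proof.
move=> x_ge0 y_ge0 xc yc; case/orP: (ger_leVge x_ge0 y_ge0) => [xy|yx].
  by apply: le_trans yc; rewrite expr2 ler_wpM2r.
by apply: le_trans xc; rewrite expr2 ler_wpM2l.
Qed.

Section PositiveOperators.
Variable R : realType.
Local Notation C := R[i].

Definition qform n (A : 'M[C]_n) (v : 'cV[C]_n) : C := (v^t* *m A *m v) 0 0.

Lemma psdP n (A : 'M[C]_n) : psd A <-> A^t* = A /\ forall v, 0 <= qform A v.
Proof. by rewrite /psd /adjmx map_trmx; under eq_forall do rewrite map_trmx. Qed.

Lemma trmxC_mul m k l (A : 'M[C]_(m, k)) (B : 'M[C]_(k, l)) :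
  (A *m B)^t* = B^t* *m A^t*.
Proof. by rewrite trmx_mul map_mxM. Qed.

Lemma qformJ n (P A : 'M[C]_n) v : qform (P^t* *m A *m P) v = qform A (P *m v).
Proof. by rewrite /qform trmxC_mul !mulmxA. Qed.

Lemma qformE n (A : 'M[C]_n) v :
  qform A v = \sum_j \sum_i (v i 0)^* * A i j * v j 0.
Proof.
rewrite /qform mxE; apply: eq_bigr => j _; rewrite mxE big_distrl.
by apply: eq_bigr => i _; rewrite !mxE.
Qed.

Lemma qform_diag n (d : 'rV[C]_n) v :
  qform (diag_mx d) v = \sum_i d 0 i * `|v i 0| ^+ 2.
Proof.
rewrite /qform mul_mx_diag mxE; apply: eq_bigr => i _.
by rewrite !mxE normCK; ring.
Qed.

Lemma qform_scaleB n (A B : 'M[C]_n) (a : C) v :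
  qform (a *: A - B) v = a * qform A v - qform B v.
Proof. by rewrite /qform mulmxBr mulmxBl -scalemxAr -scalemxAl !mxE. Qed.

Lemma hermitian_unitary_diag n (A : 'M[C]_n) : A^t* = A ->
  exists2 P : 'M[C]_n, P \is unitarymx & exists d, A = P^t* *m diag_mx d *m P.
Proof.
move=> A_h.
have /orthomx_spectralP eA : A \is normalmx by apply/normalmxP; rewrite A_h.
exists (spectralmx A); first exact: spectral_unitarymx.
by exists (spectral_diag A); rewrite -invmx_unitary ?spectral_unitarymx.
Qed.

Lemma unitarymx_tK n (P : 'M[C]_n) : P \is unitarymx -> P^t* *m P = 1%:M.
Proof. by move/unitarymxP/mulmx1C. Qed.

Lemma diag_entry_qform n (P A : 'M[C]_n) i :
  (P *m A *m P^t*) i i = qform A ((row i P)^t*).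
Proof.
rewrite /qform trmxCK -row_mul !mxE; apply: eq_bigr => k _.
by rewrite !mxE.
Qed.

Lemma psd_unitary_diag_ge0 n (P : 'M[C]_n) d :
  P \is unitarymx -> psd (P^t* *m diag_mx d *m P) -> forall i, 0 <= d 0 i.
Proof.
move=> uP /psdP[_ A_q] i.
have <- : (P *m (P^t* *m diag_mx d *m P) *m P^t*) i i = d 0 i.
  by rewrite !mulmxA (unitarymxP uP) mul1mx mulmxtVK // mxE eqxx mulr1n.
by rewrite diag_entry_qform.
Qed.

Lemma psd_tr_mul_ge0 n (A B : 'M[C]_n) : psd A -> psd B -> 0 <= \tr (A *m B).
Proof.
move=> /psdP[_ A_q] B_psd; have [B_h _] := (psdP _).1 B_psd.
have [P uP [d eB]] := hermitian_unitary_diag B_h.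
have d_ge0 : forall i, 0 <= d 0 i by apply: psd_unitary_diag_ge0 uP _; rewrite -eB.
rewrite eB !mulmxA mxtrace_mulC !mulmxA; apply: sumr_ge0 => i _.
by rewrite mul_mx_diag mxE diag_entry_qform mulr_ge0.
Qed.

Lemma qform_dominated_by_diag n (r : 'M[C]_n) (d : 'rV[C]_n) :
  (forall w, 0 <= qform r w) -> (forall i, 0 <= d 0 i) ->
  (forall i j, d 0 i = 0 \/ d 0 j = 0 -> r i j = 0) ->
  exists2 mu : C, 0 <= mu & forall w, qform r w <= mu * qform (diag_mx d) w.
Proof.
move=> r_q d_ge0 r0.
(* [0^-1 = 0], so [s] sums the inverses of the nonzero eigenvalues only. *)
set M := \sum_j \sum_i `|r i j|; set s := \sum_k (d 0 k)^-1.
have M_ge0 : 0 <= M by do 2!apply: sumr_ge0 => ? _.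
have s_ge0 : 0 <= s by apply: sumr_ge0 => k _; rewrite invr_ge0.
exists (M * s) => [|w]; first exact: mulr_ge0.
set Q := qform (diag_mx d) w.
have dw_ge0 k : 0 <= d 0 k * `|w k 0| ^+ 2 by rewrite mulr_ge0 ?exprn_ge0.
have w_le i : d 0 i != 0 -> `|w i 0| ^+ 2 <= s * Q.
  move=> di_neq0; have s_di : 1 <= s * d 0 i.
    rewrite -(mulVf di_neq0) ler_wpM2r //.
    by apply: ler_sum_term => k; rewrite invr_ge0.
  apply: (@le_trans _ _ (s * (d 0 i * `|w i 0| ^+ 2))).
    by rewrite mulrA -[X in X <= _]mul1r ler_wpM2r ?exprn_ge0.
  by rewrite ler_wpM2l // /Q qform_diag; apply: ler_sum_term.
have term_le i j : `|(w i 0)^* * r i j * w j 0| <= `|r i j| * (s * Q).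
  have [->|rij] := eqVneq (r i j) 0; first by rewrite !(mulr0, mul0r, normr0).
  have [di dj] : d 0 i != 0 /\ d 0 j != 0.
    by split; apply/eqP => d0; case/eqP: rij; apply: r0; [left|right].
  rewrite !normrM norm_conjC mulrAC mulrC ler_wpM2l //.
  by apply: mulr_le_of_sqr_le; rewrite ?w_le.
rewrite -(ger0_norm (r_q w)) qformE -mulrA.
apply: le_trans (ler_norm_sum _ _ _) _; rewrite /M mulr_suml; apply: ler_sum => j _.
apply: le_trans (ler_norm_sum _ _ _) _; rewrite mulr_suml; apply: ler_sum => i _.
exact: term_le.
Qed.

Lemma conj_real_complex (x : R) : (x%:C%C)^* = x%:C%C :> C.
Proof. exact: conjc_real. Qed.

Lemma opleq_qform n (rho sig : 'M[C]_n) (mu : R) : rho^t* = rho -> sig^t* = sig ->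
  (forall v, qform rho v <= mu%:C%C * qform sig v) -> opleq rho (mu%:C%C *: sig).
Proof.
move=> rho_h sig_h le_rs; apply/psdP; split => [|v].
  by rewrite linearB linearZ /= map_mxB map_mxZ /= conj_real_complex rho_h sig_h.
by rewrite qform_scaleB subr_ge0.
Qed.

Lemma supp_sub_mulmx n (rho sig : 'M[C]_n) : rho^t* = rho -> sig^t* = sig ->
  supp_sub rho sig -> exists K, rho = K *m sig.
Proof.
move=> rho_h sig_h /submxP[K eK]; exists ((K^T)^t*).
have e_rho : rho = sig *m K^T by rewrite -[rho]trmxK eK trmx_mul trmxK.
by rewrite -rho_h e_rho trmxC_mul sig_h.
Qed.

Lemma psd_dominated n (rho sig : 'M[C]_n) : psd rho -> psd sig -> supp_sub rho sig ->
  exists mu : R, opleq rho (mu%:C%C *: sig).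
Proof.
move=> /psdP[rho_h rho_q] sig_psd supp; have [sig_h _] := (psdP _).1 sig_psd.
have [K eK] := supp_sub_mulmx rho_h sig_h supp.
have [P uP [d eS]] := hermitian_unitary_diag sig_h.
have d_ge0 : forall i, 0 <= d 0 i by apply: psd_unitary_diag_ge0 uP _; rewrite -eS.
set r := P *m rho *m P^t*.
have e_rho : rho = P^t* *m r *m P.
  by rewrite /r !mulmxA (unitarymx_tK uP) mul1mx mulmxKtV.
have e_r : r = P *m K *m P^t* *m diag_mx d by rewrite /r eK eS !mulmxA mulmxtVK.
have r_h : r^t* = r by rewrite /r !trmxC_mul trmxCK rho_h mulmxA.
have r_q w : 0 <= qform r w by rewrite /r -{1}[P]trmxCK qformJ.
clearbody r.
(* In the eigenbasis of [sig], [r = E diag d] vanishes on the columns of the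
   kernel of [sig], hence, being Hermitian, on its rows too. *)
have r0 i j : d 0 i = 0 \/ d 0 j = 0 -> r i j = 0.
  have r0r k l : d 0 l = 0 -> r k l = 0.
    by move=> dl0; rewrite e_r mul_mx_diag mxE dl0 mulr0.
  by case=> [di0|/r0r //]; rewrite -r_h !mxE r0r // conjC0.
have [mu mu_ge0 dom] := qform_dominated_by_diag r_q d_ge0 r0.
exists (complex.Re mu); apply: opleq_qform => // v.
by rewrite (RRe_real (ger0_real mu_ge0)) e_rho eS !qformJ.
Qed.

Lemma Re_sum (I : finType) (z : I -> C) :
  complex.Re (\sum_i z i) = \sum_i complex.Re (z i).
Proof. exact: (raddf_sum (@complex.Re R : Rcomplex R -> R)). Qed.

Lemma Re_real_complexM (c : R) (z : C) : complex.Re (c%:C%C * z) = c * complex.Re z.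
Proof. by case: z => a b /=; rewrite mul0r subr0. Qed.

Lemma ler_Re (z w : C) : z <= w -> complex.Re z <= complex.Re w.
Proof. by rewrite lecE => /andP[]. Qed.

Lemma psd1 n : psd (1%:M : 'M[C]_n).
Proof.
apply/psdP; split => [|v]; first by rewrite trmx1 map_mx1.
rewrite /qform mulmx1 mxE; apply: sumr_ge0 => i _.
by rewrite !mxE mulrC mul_conjC_ge0.
Qed.

Lemma psd_sum (I : finType) n (c : I -> R) (A : I -> 'M[C]_n) :
  (forall i, 0 <= c i) -> (forall i, psd (A i)) -> psd (\sum_i (c i)%:C%C *: A i).
Proof.
move=> c_ge0 A_psd; apply/psdP; split => [|v].
  rewrite linear_sum raddf_sum; apply: eq_bigr => i _.
  have /psdP[A_h _] := A_psd i.
  by rewrite linearZ /= map_mxZ /= conj_real_complex A_h.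
rewrite /qform mulmx_sumr mulmx_suml summxE; apply: sumr_ge0 => i _.
have /psdP[_ A_q] := A_psd i.
by rewrite -scalemxAr -scalemxAl mxE mulr_ge0 ?ler0c ?A_q.
Qed.

Lemma Re_tr_mul_ge0 n (A B : 'M[C]_n) :
  psd A -> psd B -> 0 <= complex.Re (\tr (A *m B)).
Proof. by move=> A_psd B_psd; apply: (@ler_Re 0); apply: psd_tr_mul_ge0. Qed.

Lemma opleq_Re_tr_le n (rho sig F : 'M[C]_n) (mu : R) :
  opleq rho (mu%:C%C *: sig) -> psd F ->
  complex.Re (\tr (rho *m F)) <= mu * complex.Re (\tr (sig *m F)).
Proof.
move=> le_rs /(psd_tr_mul_ge0 le_rs).
rewrite mulmxBl linearB /= -scalemxAl mxtraceZ subr_ge0 => /ler_Re.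
by rewrite Re_real_complexM.
Qed.

End PositiveOperators.

Section Leakage.
Variable R : realType.
Local Notation C := R[i].

Definition dominating_consts n (rho sig : 'M[C]_n) : set R :=
  [set mu | opleq rho (mu%:C%C *: sig)].

Lemma Re_tr_le_inf_dominating n (rho sig F : 'M[C]_n) :
  psd sig -> (dominating_consts rho sig !=set0)%classic -> psd F ->
  complex.Re (\tr (rho *m F))
    <= inf (dominating_consts rho sig) * complex.Re (\tr (sig *m F)).
Proof.
move=> sig_psd [mu0 dom_mu0] F_psd.
set t := complex.Re (\tr (sig *m F)).
have [t0|t_neq0] := eqVneq t 0.
  by have := opleq_Re_tr_le dom_mu0 F_psd; rewrite -/t t0 !mulr0.
have t_gt0 : 0 < t by rewrite lt_def t_neq0 Re_tr_mul_ge0.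
rewrite -ler_pdivrMr //; apply: lb_le_inf => [|mu dom_mu]; first by exists mu0.
by rewrite ler_pdivrMr //; exact: opleq_Re_tr_le.
Qed.

Lemma inf_dominating_consts_ge1 n (rho sig : 'M[C]_n) :
  \tr rho = 1 -> \tr sig = 1 -> (dominating_consts rho sig !=set0)%classic ->
  1 <= inf (dominating_consts rho sig).
Proof.
move=> tr_rho tr_sig dom_ne; apply: lb_le_inf dom_ne _ => mu.
by move/opleq_Re_tr_le/(_ (psd1 _ n)); rewrite !mulmx1 tr_rho tr_sig mulr1.
Qed.

Lemma povm_sum_tr n (Y : finType) (F : Y -> 'M[C]_n) (A : 'M[C]_n) :
  povm F -> \sum_y \tr (A *m F y) = \tr A.
Proof. by case=> _ sumF; rewrite -linear_sum /= -mulmx_sumr sumF mulmx1. Qed.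

Lemma leak_sum_ge1 n (X Y : finType) (rho : X -> 'M[C]_n) (F : Y -> 'M[C]_n) x0 :
  \tr (rho x0) = 1 -> povm F ->
  1 <= \sum_y \big[Num.max/0]_x complex.Re (\tr (rho x *m F y)).
Proof.
move=> tr_rho povmF.
apply: (@le_trans _ _ (\sum_y complex.Re (\tr (rho x0 *m F y)))).
  by rewrite -Re_sum povm_sum_tr // tr_rho.
by apply: ler_sum => y _; apply: (le_bigmax _ (fun x => complex.Re (\tr (rho x *m F y)))).
Qed.

Lemma leak_sum_le n (X Y : finType) (rho : X -> 'M[C]_n) (sig : 'M[C]_n)
    (F : Y -> 'M[C]_n) (c : R) :
  povm F -> psd sig -> \tr sig = 1 -> 0 <= c ->
  (forall x G, psd G ->
     complex.Re (\tr (rho x *m G)) <= c * complex.Re (\tr (sig *m G))) ->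
  \sum_y \big[Num.max/0]_x complex.Re (\tr (rho x *m F y)) <= c.
Proof.
move=> povmF sig_psd tr_sig c_ge0 rho_le.
apply: (@le_trans _ _ (\sum_y c * complex.Re (\tr (sig *m F y)))).
  apply: ler_sum => y _; apply: bigmax_le => [|x _]; last exact: rho_le (povmF.1 y).
  by rewrite mulr_ge0 // (Re_tr_mul_ge0 sig_psd (povmF.1 y)).
by rewrite -mulr_sumr -Re_sum povm_sum_tr // tr_sig mulr1.
Qed.

Lemma ler_log2 (x y : R) : 0 < x -> x <= y -> log2 x <= log2 y.
Proof.
move=> x_gt0 xy; rewrite /log2 ler_wpM2r ?invr_ge0 ?ln_ge0 ?ler1n //.
by rewrite ler_ln ?posrE // (lt_le_trans x_gt0 xy).
Qed.

End Leakage.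

Theorem proposition1 (R : realType) (X : finType) (n : nat)
  (pX : X -> R) (pX_pos : forall x, 0 < pX x) (pX_sum : \sum_(x : X) pX x = 1)
  (rho : X -> 'M[R[i]]_n) (rho_density : forall x, density (rho x))
  (pi : X -> R) (pi_ge0 : forall x, 0 <= pi x) (pi_sum : \sum_(x : X) pi x = 1) :
  (Qleak rho <=
     \big[maxe/-oo]_(x : X) Dmax (rho x) (\sum_(x' : X) ((pi x')%:C)%C *: rho x'))%E.
Proof.
set sig := \sum_(x' : X) ((pi x')%:C)%C *: rho x'.
have sig_psd : psd sig := psd_sum pi_ge0 (fun x => (rho_density x).1).
have tr_sig : \tr sig = 1.
  rewrite linear_sum (eq_bigr (fun x => (pi x)%:C%C)) => [|x _].
    by rewrite -rmorph_sum pi_sum.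
  by rewrite linearZ /= (rho_density x).2 mulr1.
have [x1 _] : exists x1 : X, true.
  case: (pickP (fun _ : X => true)) => [x1|X0]; first by exists x1.
  by move: pi_sum; rewrite big_pred0 // => /esym/eqP; rewrite oner_eq0.
case: (boolP [forall x, supp_sub (rho x) sig]) => [/forallP supp|]; last first.
  rewrite negb_forall => /existsP[x supp_x]; apply: le_trans (leey _) _.
  by apply: le_trans (le_bigmax _ _ x); rewrite /Dmax (negbTE supp_x).
set m := fun x => inf (dominating_consts (rho x) sig).
have dom_ne x : (dominating_consts (rho x) sig !=set0)%classic.
  by have [mu] := psd_dominated (rho_density x).1 sig_psd (supp x); exists mu.
have m_ge1 x : 1 <= m x by apply: inf_dominating_consts_ge1 (rho_density x).2 tr_sig _.
have [x0 _ x0_max] := @arg_maxP _ R X x1 xpredT m isT.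
apply: ge_ereal_sup => _ [Y [F [povmF ->]]].
apply: le_trans (le_bigmax _ _ x0); rewrite /Dmax supp lee_fin.
apply: ler_log2; first exact: lt_le_trans ltr01 (leak_sum_ge1 (rho_density x1).2 povmF).
rewrite -/(dominating_consts _ _) -/(m x0).
apply: (leak_sum_le povmF sig_psd tr_sig) => [|x G G_psd].
  exact: le_trans ler01 (m_ge1 x0).
apply: le_trans (Re_tr_le_inf_dominating sig_psd (dom_ne x) G_psd) _.
by apply: ler_wpM2r; [exact: Re_tr_mul_ge0 | exact: x0_max].
Qed.
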